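(* Let $k=\mathbb R$ or $\mathbb C$, let $(E,g)$ be a finite-dimensional inner product vector space over $k$, let $f\in\operatorname{End}_k(E)$, let $H_1,\dots,H_n$ be $f$-invariant subspaces with $E=H_1\oplus\dots\oplus H_n$, and write $f_i=f|_{H_i}$. Let $\mathcal H_f^\perp=[\operatorname{Im} f_1]_1^\perp\oplus\dots\oplus[\operatorname{Im} f_n]_n^\perp$. Then $\mathcal H_f^\perp=[\operatorname{Im} f]^\perp$ if and only if $[\operatorname{Im} f_i]_i^\perp\subseteq\big[\sum_{j\ne i}\operatorname{Im} f_j\big]^\perp$ for every $i\in\{1,\dots,n\}$.
   Context: An inner product is linear in the first argument, conjugate-symmetric and positive definite. For a subspace $U\subseteq E$, $U^\perp=\{e\in E:g(u,e)=0\ \forall u\in U\}$; for a subspace $W\subseteq H_i$, $[W]_i^\perp=\{v\in H_i:g(w,v)=0\ \forall w\in W\}$. *)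

(* k = R (Stdlib reals, a rcfType via Rstruct) or C = R[i]
   (mathcomp-real-closed complex numbers). *)
From HB Require Import structures.
From mathcomp Require Import all_boot all_order all_algebra complex.
From mathcomp Require Import Rstruct.
Set Implicit Arguments. Unset Strict Implicit. Unset Printing Implicit Defensive.
Import Order.TTheory GRing.Theory Num.Theory.
Local Open Scope ring_scope.

Section InnerProduct.
Variables (K : numFieldType) (conj : K -> K) (E : vectType K).

Definition inner_product (g : E -> E -> K) : Prop :=
  [/\ forall (a : K) (u v w : E), g (a *: u + v) w = a * g u w + g v w,
      forall u v : E, g u v = conj (g v u) &
      forall u : E, u != 0 -> 0 < g u u].

Definition orth (g : E -> E -> K) (U : {vspace E}) (e : E) : Prop :=
  forall u, u \in U -> g u e = 0.

Definition rel_orth (g : E -> E -> K) (Hi W : {vspace E}) (v : E) : Prop :=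
  v \in Hi /\ orth g W v.

Definition Hf_perp (g : E -> E -> K) (f : 'End(E)) (n : nat)
  (H : 'I_n -> {vspace E}) (x : E) : Prop :=
  exists v : 'I_n -> E,
    (forall i, rel_orth g (H i) (f @: H i)%VS (v i)) /\ x = \sum_(i < n) v i.

End InnerProduct.

Definition lemma3p7_for (K : numFieldType) (conj : K -> K) : Prop :=
  forall (E : vectType K) (g : E -> E -> K) (f : 'End(E)) (n : nat)
         (H : 'I_n -> {vspace E}),
    inner_product conj g ->
    (forall i, (f @: H i <= H i)%VS) ->
    (\sum_(i < n) H i)%VS = fullv ->
    directv (\sum_(i < n) H i) ->
    ((forall x, Hf_perp g f H x <-> orth g (limg f) x) <->
     (forall i (v : E), rel_orth g (H i) (f @: H i)%VS v ->
        orth g (\sum_(j < n | j != i) (f @: H j))%VS v)).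

(* Write W_i for [Im f_i]_i^perp.  Since Im f = Im f_1 + ... + Im f_n, a vector
   of W_i is orthogonal to Im f exactly when it is orthogonal to the other
   images, which gives one direction and the inclusion of H_f^perp in
   [Im f]^perp.  Conversely, split x ⊥ Im f along E = H_1 + ... + H_n and then
   each component orthogonally inside H_i as a_i + b_i with a_i ∈ Im f_i and
   b_i ∈ W_i.  When each W_i is orthogonal to the other images, every b_i is
   orthogonal to Im f, hence so is the vector a_1 + ... + a_n of Im f, which
   equals x - (b_1 + ... + b_n); so it vanishes. *)
From HB Require Import structures.
From mathcomp Require Import all_boot all_order all_algebra complex.
From mathcomp Require Import Rstruct.
Set Implicit Arguments. Unset Strict Implicit. Unset Printing Implicit Defensive.
Import Order.TTheory GRing.Theory Num.Theory.
Local Open Scope ring_scope.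

Section InnerProductTheory.
Variables (K : numFieldType) (conj : K -> K) (E : vectType K) (g : E -> E -> K).
Hypothesis g_ip : inner_product conj g.

Definition ip_left (w : E) : E -> K^o := fun u => g u w.

Lemma ip_left_linear w : linear (ip_left w).
Proof. by case: g_ip => linl _ _ a u v; apply: linl. Qed.

HB.instance Definition _ w :=
  GRing.isLinear.Build K E K^o *:%R (ip_left w) (ip_left_linear w).

Lemma ip0l w : g 0 w = 0.
Proof. exact: (raddf0 (ip_left w)). Qed.

Lemma ipZl a u w : g (a *: u) w = a * g u w.
Proof. exact: (linearZ_LR (ip_left w) a u). Qed.

Lemma ipBl u v w : g (u - v) w = g u w - g v w.
Proof. exact: (raddfB (ip_left w)). Qed.

Lemma ip_suml (I : Type) (r : seq I) (P : pred I) (F : I -> E) w :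
  g (\sum_(i <- r | P i) F i) w = \sum_(i <- r | P i) g (F i) w.
Proof. exact: (raddf_sum (ip_left w)). Qed.

Lemma conj0 : conj 0 = 0.
Proof. by case: g_ip => _ sym _; rewrite -(ip0l 0) -sym. Qed.

Lemma ip_eq0_sym u v : g u v = 0 -> g v u = 0.
Proof. by case: g_ip => _ sym _ uv0; rewrite sym uv0 conj0. Qed.

Lemma ip0r w : g w 0 = 0.
Proof. exact/ip_eq0_sym/ip0l. Qed.

Lemma ip_self_eq0 u : g u u = 0 -> u = 0.
Proof.
case: g_ip => _ _ pos uu0; apply/eqP; apply: contraTT isT => /pos.
by rewrite uu0 ltxx.
Qed.

Lemma orth0 (U : {vspace E}) : orth g U 0.
Proof. by move=> u _; apply: ip0r. Qed.

Lemma orthS (U V : {vspace E}) w : (U <= V)%VS -> orth g V w -> orth g U w.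
Proof. by move=> /subvP sUV wV u /sUV; apply: wV. Qed.

Lemma orth_sumv (I : finType) (P : pred I) (Us : I -> {vspace E}) w :
  (forall i, P i -> orth g (Us i) w) -> orth g (\sum_(i | P i) Us i)%VS w.
Proof.
move=> wUs u /memv_sumP[us usUs ->]; rewrite ip_suml big1 // => i Pi.
exact: wUs (usUs i Pi).
Qed.

Lemma orth_sum (U : {vspace E}) (I : Type) (r : seq I) (P : pred I) (F : I -> E) :
  (forall i, P i -> orth g U (F i)) -> orth g U (\sum_(i <- r | P i) F i).
Proof.
move=> UF u uU; apply: ip_eq0_sym; rewrite ip_suml big1 // => i Pi.
exact/ip_eq0_sym/UF.
Qed.

Lemma orthB (U : {vspace E}) u v : orth g U u -> orth g U v -> orth g U (u - v).
Proof.
move=> uU vU w wU; apply: ip_eq0_sym.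
by rewrite ipBl (ip_eq0_sym (uU w wU)) (ip_eq0_sym (vU w wU)) subr0.
Qed.

Lemma orth_self (U : {vspace E}) w : w \in U -> orth g U w -> w = 0.
Proof. by move=> wU wUperp; apply/ip_self_eq0/wUperp. Qed.

Section OrthogonalDecomposition.
Variable U : {vspace E}.

Definition gram_row (x : E) : 'rV[K]_(\dim U) := \row_k g x (vbasis U)`_k.

Lemma gram_row_linear : linear gram_row.
Proof. by move=> a u v; apply/rowP => k; rewrite !mxE; exact: (linearP (ip_left _)). Qed.

HB.instance Definition _ :=
  GRing.isLinear.Build K E 'rV[K]_(\dim U) *:%R gram_row gram_row_linear.

Lemma orth_lker_gram_row x : x \in lker (linfun gram_row) -> orth g U x.
Proof.
rewrite memv_ker lfunE => /eqP/rowP x0 u /coord_vbasis ->.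
rewrite ip_suml big1 // => k _; rewrite ipZl ip_eq0_sym ?mulr0 //.
by have := x0 k; rewrite !mxE.
Qed.

Lemma orth_decomp V v : (U <= V)%VS -> v \in V ->
  exists2 a, a \in U & exists2 b, b \in V /\ orth g U b & v = a + b.
Proof.
(* W is U^perp inside V: it meets U trivially and, being cut out of V by the
   dim U equations gram_row = 0, has codimension at most dim U. *)
move=> sUV vV; set W := (V :&: lker (linfun gram_row))%VS.
have W_orth b : b \in W -> orth g U b by case/memv_capP => _ /orth_lker_gram_row.
have UW0 : (U :&: W = 0)%VS.
  apply/eqP; rewrite -subv0; apply/subvP => u /memv_capP[uU uW].
  by rewrite memv0 (orth_self uU (W_orth u uW)).
have dim_img : (\dim (linfun gram_row @: V) <= \dim U)%N.
  by rewrite (leq_trans (dimvS (subvf _))) // dimvf /dim /= mul1n.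
have UW_V : (U + W)%VS = V.
  apply/eqP; rewrite eqEdim subv_add sUV capvSl dimv_disjoint_sum //.
  by rewrite -(limg_ker_dim (linfun gram_row) V) -/W addnC leq_add2r.
have /memv_addP[a aU [b bW ->]] : v \in (U + W)%VS by rewrite UW_V.
by exists a => //; exists b => //; split; [case/memv_capP: bW | apply: W_orth].
Qed.

End OrthogonalDecomposition.
End InnerProductTheory.

Section InvariantSum.
Variables (K : numFieldType) (conj : K -> K) (E : vectType K) (g : E -> E -> K).
Variables (f : 'End(E)) (n : nat) (H : 'I_n -> {vspace E}).
Hypothesis g_ip : inner_product conj g.
Hypothesis f_stable : forall i, (f @: H i <= H i)%VS.
Hypothesis H_span : (\sum_(i < n) H i)%VS = fullv.

Lemma limg_sum_imgs : limg f = (\sum_(i < n) f @: H i)%VS.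
Proof. by rewrite -limg_sum H_span. Qed.

Lemma orth_limg_split i w : orth g (f @: H i)%VS w ->
  orth g (\sum_(j < n | j != i) f @: H j)%VS w -> orth g (limg f) w.
Proof.
move=> wi wj; rewrite limg_sum_imgs; apply: (orth_sumv g_ip) => j _.
by have [-> // | ji] := eqVneq j i; apply: orthS wj; apply: (sumv_sup j).
Qed.

Lemma rel_orth_Hf_perp i v : rel_orth g (H i) (f @: H i)%VS v -> Hf_perp g f H v.
Proof.
move=> vi; exists (fun j => if j == i then v else 0); split.
  by move=> j; case: eqP => [-> // | _]; split; [apply: mem0v | exact: (orth0 g_ip)].
by rewrite (bigD1 i) //= eqxx big1 ?addr0 // => j /negbTE ->.
Qed.

Section CrossOrthogonality.
Hypothesis cross_orth : forall i v, rel_orth g (H i) (f @: H i)%VS v ->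
  orth g (\sum_(j < n | j != i) f @: H j)%VS v.

Lemma rel_orth_limg i v : rel_orth g (H i) (f @: H i)%VS v -> orth g (limg f) v.
Proof. by move=> vi; apply: (orth_limg_split vi.2 (cross_orth vi)). Qed.

Lemma Hf_perp_orth_limg x : Hf_perp g f H x -> orth g (limg f) x.
Proof. by case=> v [vH ->]; apply: (orth_sum g_ip) => i _; apply: rel_orth_limg. Qed.

Lemma orth_limg_Hf_perp x : orth g (limg f) x -> Hf_perp g f H x.
Proof.
move=> x_orth; have /memv_sumP[xs xsH x_sum] : x \in (\sum_i H i)%VS.
  by rewrite H_span memvf.
have xs_split i : exists ab : E * E, [/\ ab.1 \in (f @: H i)%VS,
    rel_orth g (H i) (f @: H i)%VS ab.2 & xs i = ab.1 + ab.2].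
  have [a a_img [b b_perp xsE]] := orth_decomp g_ip (f_stable i) (xsH i isT).
  by exists (a, b).
have [ab abP] := fin_all_exists xs_split.
exists (fun i => (ab i).2); split; first by move=> i; case: (abP i).
set y := \sum_i (ab i).1.
have xE : x = y + \sum_i (ab i).2.
  by rewrite x_sum /y -big_split; apply: eq_bigr => i _; case: (abP i).
suff y0 : y = 0 by rewrite xE y0 add0r.
have y_img : y \in limg f.
  by rewrite limg_sum_imgs; apply: memv_sumr => i _; case: (abP i).
apply: (orth_self g_ip y_img); rewrite (_ : y = x - \sum_i (ab i).2).
  apply: (orthB g_ip) => //; apply: (orth_sum g_ip) => i _.
  by case: (abP i) => _ bi _; apply: rel_orth_limg bi.
by rewrite xE addrK.
Qed.

End CrossOrthogonality.
End InvariantSum.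

Lemma lemma3p7_for_numField (K : numFieldType) (conj : K -> K) : lemma3p7_for conj.
Proof.
move=> E g f n H g_ip f_stable H_span _; split=> [Hf_perpE i v vi | cross_orth x].
  apply: orthS _ ((Hf_perpE v).1 (rel_orth_Hf_perp g_ip vi)).
  by apply/subv_sumP => j _; apply/limgS/subvf.
split; first exact: (Hf_perp_orth_limg g_ip H_span cross_orth).
exact: (orth_limg_Hf_perp g_ip f_stable H_span cross_orth).
Qed.

Theorem lemma3p7 :
  lemma3p7_for (K := Rdefinitions.R) id /\
  lemma3p7_for (K := (Rdefinitions.R)[i]) Num.conj.
Proof. by split; apply: lemma3p7_for_numField. Qed.
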